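(* Let $W$ be the affine Weyl group of an irreducible reduced crystallographic root system of rank 2, with simple generators $s_0,s_1,s_2$ and $W_0=\langle s_1,s_2\rangle$. Let $H_{r_0},H_{r_1}$ be adjacent parallel hyperplanes ($H_{\alpha,c}$ and $H_{\alpha,c+1}$ for some root $\alpha$, $c\in\mathbb{Z}$) and suppose both the alcove $w\in W$ and the identity alcove lie in the strip between them. Suppose $D_R(w)=\{0,i\}$ with $i\in\{1,2\}$. If $(s_0s_i)^2\neq 1$, then $ws_i$ is the minimal length element of the coset $wW_0$.
   Context: $W$ is generated by the reflections in the lines $H_{\beta,k}=\{v:\langle v,\beta\rangle=k\}$ ($\beta$ a root, $k\in\mathbb{Z}$) in a Euclidean plane; its simple generators $s_0,s_1,s_2$ are the reflections in the walls of the fundamental alcove $A_0$, $s_0$ being the reflection in the wall not through the origin, and $W_0=\langle s_1,s_2\rangle$. Elements are identified with alcoves via $w\mapsto wA_0$. $\ell$ is Coxeter length; $D_R(w)=\{j:\ell(ws_j)<\ell(w)\}$. *)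

From HB Require Import structures.
From mathcomp Require Import all_boot all_order all_algebra.
From mathcomp Require Import boolp Rstruct.
Set Implicit Arguments. Unset Strict Implicit. Unset Printing Implicit Defensive.
Import Order.TTheory GRing.Theory Num.Theory.
Local Open Scope ring_scope.

Notation R := Rdefinitions.R.

(* Irreducible reduced crystallographic root systems of rank 2, up to
   isomorphism: A2, B2 (= C2), G2. *)
Inductive rs_type := A2 | B2 | G2.

(* Points of the Euclidean plane V, written in coordinates w.r.t. the basis of
   simple roots alpha_1, alpha_2: (x1, x2) stands for x1 alpha_1 + x2 alpha_2. *)
Definition V := (R * R)%type.

(* Gram matrix of the simple roots (g11, g12, g22).
   A2: |a1|^2 = |a2|^2 = 2, angle 120 deg.
   B2: a1 long (|a1|^2 = 2), a2 short (|a2|^2 = 1), angle 135 deg.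
   G2: a1 short (|a1|^2 = 2), a2 long (|a2|^2 = 6), angle 150 deg. *)
Definition gram (t : rs_type) : int * int * int :=
  match t with
  | A2 => (2, -1, 2)%R
  | B2 => (2, -1, 1)%R
  | G2 => (2, -3, 6)%R
  end.

Definition ip (t : rs_type) (v u : V) : R :=
  let: (g11, g12, g22) := gram t in
  g11%:~R * v.1 * u.1 + g12%:~R * (v.1 * u.2 + v.2 * u.1) + g22%:~R * v.2 * u.2.

(* Positive roots, as integer coefficients on (alpha_1, alpha_2). *)
Definition pos_roots (t : rs_type) : seq (int * int) :=
  match t with
  | A2 => [:: (1, 0); (0, 1); (1, 1)]
  | B2 => [:: (1, 0); (0, 1); (1, 1); (1, 2)]
  | G2 => [:: (1, 0); (0, 1); (1, 1); (2, 1); (3, 1); (3, 2)]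
  end%R.

Definition root_list (t : rs_type) : seq (int * int) :=
  pos_roots t ++ [seq (- b.1, - b.2)%R | b <- pos_roots t].

Definition highest_root (t : rs_type) : int * int :=
  match t with
  | A2 => (1, 1)
  | B2 => (1, 2)
  | G2 => (3, 2)
  end%R.

Definition rvec (b : int * int) : V := (b.1%:~R, b.2%:~R).

Definition pairing (t : rs_type) (v : V) (b : int * int) : R := ip t v (rvec b).

Definition refl (t : rs_type) (b : int * int) (k : int) (v : V) : V :=
  let c := 2%:R * (pairing t v b - k%:~R) / ip t (rvec b) (rvec b) in
  (v.1 - c * (rvec b).1, v.2 - c * (rvec b).2).

Definition A0 (t : rs_type) : V -> Prop :=
  fun v => forall b, b \in pos_roots t -> 0 < pairing t v b < 1.

Definition sgen (t : rs_type) (j : 'I_3) : V -> V :=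
  match val j with
  | 0%N => refl t (highest_root t) 1
  | 1%N => refl t (1, 0)%R 0
  | _ => refl t (0, 1)%R 0
  end.

(* Elements of W are represented by words in the simple generators;
   the word j_1 ... j_m acts as s_{j_1} o ... o s_{j_m}, so that
   act (w ++ u) = act w o act u.  Two words represent the same element of W
   iff they induce the same map V -> V. *)
Definition act (t : rs_type) (w : seq 'I_3) : V -> V :=
  foldr (fun j f => sgen t j \o f) id w.

Lemma length_exists (t : rs_type) (w : seq 'I_3) :
  exists n, `[< exists u : seq 'I_3, size u = n /\ act t u = act t w >].
Proof. by exists (size w); apply/asboolP; exists w. Qed.

Definition len (t : rs_type) (w : seq 'I_3) : nat := ex_minn (length_exists t w).

Definition alcove (t : rs_type) (w : seq 'I_3) : V -> Prop :=
  fun v => exists2 x, A0 t x & v = act t w x.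

Definition in_strip (t : rs_type) (b : int * int) (c : int) (X : V -> Prop) :=
  forall v, X v -> c%:~R < pairing t v b < (c + 1)%:~R.

Definition W0word (u : seq 'I_3) : bool := all (fun j : 'I_3 => val j != 0%N) u.

From mathcomp Require Import all_boot all_order all_algebra.
From mathcomp Require Import boolp Rstruct.
From mathcomp Require Import ring lra zify.
Set Implicit Arguments. Unset Strict Implicit. Unset Printing Implicit Defensive.
Import Order.TTheory GRing.Theory Num.Theory.
Local Open Scope ring_scope.

(* In suitable coordinates W acts on the plane by integral affine maps S, and for a
   generic point c0 of A0 the Coxeter length of S is the number of hyperplanes separating
   A0 from S A0, i.e. the sum over positive roots b of |floor <S c0, b>|.  Right
   multiplication by s_j changes exactly one of these floors by +-1, which identifies the
   right descents.  All elements of the coset wW0 share the translation part of w, and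
   their floors are <tr w, b> + k_b with offsets k_b in {0, -1} determined by the linear
   part; the length is therefore minimal, uniquely, when k_b = -1 exactly for the roots
   with <tr w, b> >= 1.  A finite case analysis over W0, by linear arithmetic on the
   translation part, shows that the hypotheses force w s_i to have precisely these
   offsets. *)

Definition mat := (int * int * int * int)%type.

Definition mid : mat := (1, 0, 0, 1).

Definition mmul (M N : mat) : mat :=
  let: (a, b, c, d) := M in let: (e, f, g, h) := N in
  (a * e + b * g, a * f + b * h, c * e + d * g, c * f + d * h).

Definition mvec (M : mat) (z : int * int) : int * int :=
  let: (a, b, c, d) := M in (a * z.1 + b * z.2, c * z.1 + d * z.2).

Record aff := Aff { lin : mat; tr : int * int }.

Definition acomp (S T : aff) : aff :=
  Aff (mmul (lin S) (lin T))
      ((mvec (lin S) (tr T)).1 + (tr S).1, (mvec (lin S) (tr T)).2 + (tr S).2).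

Definition aid : aff := Aff mid (0, 0).

Lemma acompA : associative acomp.
Proof.
move=> [[[[a b] c] d] [l1 l2]] [[[[e f] g] h] [m1 m2]] [[[[a' b'] c'] d'] [n1 n2]].
by rewrite /acomp /mmul /mvec /=; congr (Aff (_, _, _, _) (_, _)); ring.
Qed.

Lemma acomp_idl : left_id aid acomp.
Proof.
move=> [[[[a b] c] d] [l1 l2]].
by rewrite /acomp /mmul /mvec /=; congr (Aff (_, _, _, _) (_, _)); ring.
Qed.

Lemma acomp_idr : right_id aid acomp.
Proof.
move=> [[[[a b] c] d] [l1 l2]].
by rewrite /acomp /mmul /mvec /=; congr (Aff (_, _, _, _) (_, _)); ring.
Qed.

Lemma acomp_linear S N : acomp S (Aff N (0, 0)) = Aff (mmul (lin S) N) (tr S).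
Proof.
case: S => [[[[a b] c] d] [l1 l2]].
by rewrite /acomp /mvec /=; congr (Aff _ (_, _)); ring.
Qed.

Definition zapply (S : aff) (z : R * R) : R * R :=
  let: (a, b, c, d) := lin S in
  (a%:~R * z.1 + b%:~R * z.2 + (tr S).1%:~R, c%:~R * z.1 + d%:~R * z.2 + (tr S).2%:~R).

Lemma zapply_comp S T z : zapply (acomp S T) z = zapply S (zapply T z).
Proof.
case: S => [[[[a b] c] d] [l1 l2]]; case: T => [[[[e f] g] h] [m1 m2]].
case: z => x y; rewrite /zapply /acomp /mmul /mvec /=.
by congr pair; rewrite !rmorphD !rmorphM /=; ring.
Qed.

Lemma zapply_inj S T : zapply S =1 zapply T -> S = T.
Proof.
case: S => [[[[a b] c] d] [l1 l2]]; case: T => [[[[e f] g] h] [m1 m2]] /= E.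
move: (E (0, 0)) (E (1, 0)) (E (0, 1)); rewrite /zapply /=.
case=> E1 E2 [E3 E4] [E5 E6].
have tr1 : l1 = m1 by apply: (@intr_inj R); lra.
have tr2 : l2 = m2 by apply: (@intr_inj R); lra.
have ea : a = e by apply: (@intr_inj R); lra.
have eb : b = f by apply: (@intr_inj R); lra.
have ec : c = g by apply: (@intr_inj R); lra.
have ed : d = h by apply: (@intr_inj R); lra.
by rewrite tr1 tr2 ea eb ec ed.
Qed.

(* In the coordinates z = (x1, x2 |alpha_2|^2 / 2) every root pairs with z by an integral
   linear form [zpair] and every element of W is an integral affine map. *)
Definition zcoord t (v : V) : R * R := (v.1, v.2 * (gram t).2%:~R / 2).

Definition of_zcoord t (z : R * R) : V := (z.1, z.2 * 2 / (gram t).2%:~R).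

Lemma gram22_neq0 t : ((gram t).2%:~R : R) != 0.
Proof. by case: t; rewrite intr_eq0. Qed.

Lemma zcoordK t : cancel (of_zcoord t) (zcoord t).
Proof.
move=> [x y]; have := gram22_neq0 t.
by rewrite /zcoord /of_zcoord /= => ?; congr pair; field.
Qed.

Lemma of_zcoordK t : cancel (zcoord t) (of_zcoord t).
Proof.
move=> [x y]; have := gram22_neq0 t.
by rewrite /zcoord /of_zcoord /= => ?; congr pair; field.
Qed.

Definition aff_apply t (S : aff) : V -> V := of_zcoord t \o zapply S \o zcoord t.

Lemma aff_apply_comp t S T : aff_apply t (acomp S T) =1 aff_apply t S \o aff_apply t T.
Proof. by move=> v; rewrite /aff_apply /= zcoordK zapply_comp. Qed.

Lemma aff_apply_id t : aff_apply t aid =1 id.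
Proof.
move=> v; rewrite /aff_apply /= -[RHS](of_zcoordK t); congr of_zcoord.
by case: (zcoord t v) => x y; rewrite /zapply /=; congr pair; ring.
Qed.

Lemma aff_apply_inj t S T : aff_apply t S =1 aff_apply t T -> S = T.
Proof.
move=> E; apply: zapply_inj => z.
by have := E (of_zcoord t z); rewrite /aff_apply /= zcoordK => /(can_inj (zcoordK t)).
Qed.

Definition cartan t : int * int :=
  match t with A2 => (-1, -1) | B2 => (-1, -2) | G2 => (-3, -1) end.

Definition zpair t (z b : int * int) : int :=
  z.1 * (2 * b.1 + (cartan t).1 * b.2) + z.2 * ((cartan t).2 * b.1 + 2 * b.2).

Definition highest_coroot t : int * int :=
  match t with G2 => (1, 2) | _ => (1, 1) end.

(* s_0 is v |-> v - (<v, theta> - 1) theta^v, and [highest_coroot] is theta^v in z-coordinates. *)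
Definition gen t (n : nat) : aff :=
  match n with
  | 0%N => let h1 := zpair t (1, 0) (highest_root t) in
           let h2 := zpair t (0, 1) (highest_root t) in
           let u := highest_coroot t in
           Aff (1 - u.1 * h1, - (u.1 * h2), - (u.2 * h1), 1 - u.2 * h2) u
  | 1%N => Aff (-1, - (cartan t).2, 0, 1) (0, 0)
  | _ => Aff (1, 0, - (cartan t).1, -1) (0, 0)
  end.

Lemma aff_apply_gen t (j : 'I_3) : aff_apply t (gen t j) =1 sgen t j.
Proof.
move=> [x y]; case: j => [[|[|[|//]]] ?]; case: t;
  rewrite /aff_apply /zapply /sgen /refl /pairing /ip /rvec /zcoord /of_zcoord
          /cartan /highest_coroot /highest_root /gram /= /zpair /=;
  by congr pair; field.
Qed.

Lemma gen_invol t (j : 'I_3) : acomp (gen t j) (gen t j) = aid.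
Proof. by case: j => [[|[|[|//]]] ?]; case: t; vm_compute. Qed.

Definition word_aff t (w : seq 'I_3) : aff := foldr (fun j : 'I_3 => acomp (gen t j)) aid w.

Lemma act_word_aff t w : act t w = aff_apply t (word_aff t w).
Proof.
apply: funext => v; elim: w => [|j w IH] /=; first by rewrite aff_apply_id.
by rewrite aff_apply_comp /= -IH aff_apply_gen.
Qed.

Lemma act_eq_word_aff t u w : act t u = act t w -> word_aff t u = word_aff t w.
Proof. by rewrite !act_word_aff => E; apply: (@aff_apply_inj t) => v; rewrite E. Qed.

Lemma word_aff_cat t w u : word_aff t (w ++ u) = acomp (word_aff t w) (word_aff t u).
Proof. by elim: w => [|j w IH] /=; rewrite ?acomp_idl // IH acompA. Qed.

Lemma word_aff_rcons t w j : word_aff t (rcons w j) = acomp (word_aff t w) (gen t j).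
Proof. by rewrite -cats1 word_aff_cat /= acomp_idr. Qed.

Lemma word_aff_W0word t u : W0word u -> tr (word_aff t u) = (0, 0).
Proof.
elim: u => [|j u IH] //= /andP[j_neq0 /IH trW].
have mvec0 M : mvec M (0, 0) = (0, 0) by case: M => [[[a b] c] d]; rewrite /mvec /= !mulr0 addr0.
by rewrite /acomp trW mvec0; case: j j_neq0 => [[|[|[|//]]] ?] //= _; rewrite addr0.
Qed.

(* The linear parts of the elements of W, i.e. the Weyl group W0 in z-coordinates. *)
Definition W0mats t : seq mat :=
  match t with
  | A2 => [:: (1, 0, 0, 1); (-1, 1, 0, 1); (1, 0, 1, -1); (0, -1, 1, -1);
              (-1, 1, -1, 0); (0, -1, -1, 0)]
  | B2 => [:: (1, 0, 0, 1); (-1, 2, 0, 1); (1, 0, 1, -1); (1, -2, 1, -1);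
              (-1, 2, -1, 1); (-1, 0, -1, 1); (1, -2, 0, -1); (-1, 0, 0, -1)]
  | G2 => [:: (1, 0, 0, 1); (-1, 1, 0, 1); (1, 0, 3, -1); (2, -1, 3, -1);
              (-1, 1, -3, 2); (-2, 1, -3, 2); (2, -1, 3, -2); (1, -1, 3, -2);
              (-2, 1, -3, 1); (-1, 0, -3, 1); (1, -1, 0, -1); (-1, 0, 0, -1)]
  end.

Lemma mem_iota_ord3 (j : 'I_3) : val j \in iota 0 3.
Proof. by rewrite mem_iota add0n ltn_ord. Qed.

Lemma W0mats_genl t (j : 'I_3) M : M \in W0mats t -> mmul (lin (gen t j)) M \in W0mats t.
Proof.
have: all (fun M => all (fun n => mmul (lin (gen t n)) M \in W0mats t) (iota 0 3)) (W0mats t).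
  by case: t; vm_compute.
by move=> /allP W0_closed /W0_closed /allP; apply; apply: mem_iota_ord3.
Qed.

Lemma word_aff_W0mats t w : lin (word_aff t w) \in W0mats t.
Proof. by elim: w => [|j w IH]; [case: t | apply: W0mats_genl]. Qed.

Definition q0 t : int * int :=
  match t with A2 => (6, 6) | B2 => (9, 6) | G2 => (7, 12) end.

(* The point of A0 with z-coordinates q0 / 18; by [q0_generic] no image of it under W lies
   on a hyperplane H_{b,k}. *)
Definition c0 t : V := of_zcoord t ((q0 t).1%:~R / 18, (q0 t).2%:~R / 18).

Lemma q0_generic t :
  all (fun M => all (fun b => (zpair t (mvec M (q0 t)) b != 0) &&
                              (`|zpair t (mvec M (q0 t)) b| < 18)) (pos_roots t)) (W0mats t).
Proof. by case: t; vm_compute. Qed.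

Lemma q0_pos t : all (fun b => 0 < zpair t (q0 t) b) (pos_roots t).
Proof. by case: t; vm_compute. Qed.

Lemma pairing_c0 t S b :
  pairing t (aff_apply t S (c0 t)) b =
  (zpair t (mvec (lin S) (q0 t)) b + 18 * zpair t (tr S) b)%:~R / 18.
Proof.
case: S => [[[[a1 a2] a3] a4] [l1 l2]]; case: b => b1 b2.
by case: t; rewrite /pairing /aff_apply /zapply /c0 /ip /gram /rvec /zcoord /of_zcoord
  /zpair /mvec /cartan /q0 /=; field.
Qed.

Definition floor_off t M b : int := if zpair t (mvec M (q0 t)) b < 0 then -1 else 0.

(* [sepv t S b] is the floor of <S c0, b> (see [sepv_floor]): up to sign, the number of
   hyperplanes H_{b,k} separating A0 from S A0.  Hence [alen] is the Coxeter length. *)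
Definition sepv t S b : int := zpair t (tr S) b + floor_off t (lin S) b.

Definition alen t S : nat := \sum_(b <- pos_roots t) absz (sepv t S b).

Lemma sepv_floor t S b : lin S \in W0mats t -> b \in pos_roots t ->
  (sepv t S b)%:~R < pairing t (aff_apply t S (c0 t)) b < (sepv t S b + 1)%:~R.
Proof.
move=> SW0 bpos; rewrite pairing_c0 /sepv /floor_off.
have /allP/(_ _ SW0)/allP/(_ _ bpos)/andP[r_neq0 r_lt18] := q0_generic t.
set r := zpair t _ b in r_neq0 r_lt18 *; set x := zpair t (tr S) b.
have [n [-> lo hi]] : exists n : int, [/\ (if r < 0 then -1 else 0) = n - x,
                                         n * 18 < r + 18 * x & r + 18 * x < (n + 1) * 18].
  by case: ifP => r_lt0; [exists (x - 1) | exists x]; split; lia.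
rewrite -!(ltr_int R) in lo hi.
have -> : x + (n - x) = n by ring.
have E1 : ((n * 18)%:~R : R) = n%:~R * 18 by ring.
have E2 : (((n + 1) * 18)%:~R : R) = (n + 1)%:~R * 18 by ring.
rewrite E1 in lo; rewrite E2 in hi.
by apply/andP; split; lra.
Qed.

Lemma sepv_id t b : b \in pos_roots t -> sepv t aid b = 0.
Proof.
move=> bpos; have /allP/(_ _ bpos) q0b_pos := q0_pos t.
rewrite /sepv /floor_off [mvec _ _](_ : _ = q0 t); last first.
  by case: (q0 t) => x y; rewrite /mvec /=; congr pair; ring.
by rewrite ltNge (ltW q0b_pos) /= /zpair /=; ring.
Qed.

Lemma mid_W0mats t : mid \in W0mats t.
Proof. by case: t. Qed.

Lemma pairing_c0_itv t b : b \in pos_roots t ->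
  (0 : int)%:~R < pairing t (c0 t) b < (0 + 1 : int)%:~R.
Proof.
move=> bpos; have := sepv_floor (S := aid) (mid_W0mats t) bpos.
by rewrite sepv_id // aff_apply_id.
Qed.

Lemma A0_c0 t : A0 t (c0 t).
Proof. by move=> b /pairing_c0_itv; rewrite add0r. Qed.

Lemma int_eq_of_itv (m n : int) (y : R) :
  m%:~R < y < (m + 1)%:~R -> n%:~R < y < (n + 1)%:~R -> m = n.
Proof.
move=> /andP[m_lt lt_m1] /andP[n_lt lt_n1].
have : m < n + 1 by rewrite -(ltr_int R); lra.
have : n < m + 1 by rewrite -(ltr_int R); lra.
lia.
Qed.

Lemma pairing_oppr t v b : pairing t v (- b.1, - b.2) = - pairing t v b.
Proof. by case: t; rewrite /pairing /ip /rvec /gram /=; ring. Qed.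

Lemma itv_oppr (c : int) (x : R) :
  c%:~R < - x < (c + 1)%:~R -> (- c - 1)%:~R < x < (- c - 1 + 1)%:~R.
Proof.
have -> : ((- c - 1)%:~R : R) = - c%:~R - 1 by ring.
have -> : ((- c - 1 + 1)%:~R : R) = - c%:~R by ring.
have -> : ((c + 1)%:~R : R) = c%:~R + 1 by ring.
by move=> /andP[lo hi]; apply/andP; split; lra.
Qed.

(* Since 0 < <c0, b> < 1 for b > 0, the common strip must be that of H_{b,0} and H_{b,1}. *)
Lemma strip_sepv0 t w b c : b \in root_list t ->
  in_strip t b c (alcove t w) -> in_strip t b c (A0 t) ->
  has (fun b => sepv t (word_aff t w) b == 0) (pos_roots t).
Proof.
set S := word_aff t w.
have Sc0 : alcove t w (aff_apply t S (c0 t)).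
  by exists (c0 t); [exact: A0_c0 | rewrite act_word_aff].
move=> broot /(_ _ Sc0) S_strip /(_ _ (@A0_c0 t)) c0_strip.
have S_floor := sepv_floor (word_aff_W0mats t w).
move: broot; rewrite mem_cat => /orP[bpos | /mapP[b' b'pos b_def]].
  apply/hasP; exists b => //; apply/eqP.
  have c_eq0 : c = 0 := int_eq_of_itv c0_strip (pairing_c0_itv bpos).
  by rewrite c_eq0 in S_strip; apply: int_eq_of_itv (S_floor _ bpos) S_strip.
apply/hasP; exists b' => //; apply/eqP.
rewrite b_def !pairing_oppr in S_strip c0_strip.
move/itv_oppr: S_strip; move/itv_oppr: c0_strip.
move=> /int_eq_of_itv /(_ (pairing_c0_itv b'pos)) c_eq S_strip.
by rewrite c_eq in S_strip; apply: int_eq_of_itv (S_floor _ b'pos) S_strip.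
Qed.

Definition step t M n b : int :=
  zpair t (mvec M (tr (gen t n))) b + floor_off t (mmul M (lin (gen t n))) b - floor_off t M b.

Lemma sepv_gen t S n b : sepv t (acomp S (gen t n)) b = sepv t S b + step t (lin S) n b.
Proof. by case: S => M [l1 l2]; rewrite /sepv /step /acomp /zpair /=; ring. Qed.

Definition wall t M n : int * int :=
  nth 0 (pos_roots t) (find (fun b => step t M n b != 0) (pos_roots t)).

Lemma step_wall t M (j : 'I_3) : M \in W0mats t ->
  [/\ wall t M j \in pos_roots t,
      step t M j (wall t M j) = 1 \/ step t M j (wall t M j) = -1
    & {in pos_roots t, forall b, b != wall t M j -> step t M j b = 0}].
Proof.
have: all (fun M => all (fun n =>
        [&& wall t M n \in pos_roots t,
            (step t M n (wall t M n) == 1) || (step t M n (wall t M n) == -1)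
          & all (fun b => (b == wall t M n) || (step t M n b == 0)) (pos_roots t)])
        (iota 0 3)) (W0mats t).
  by case: t; vm_compute.
move=> /allP walls /walls /allP /(_ _ (mem_iota_ord3 j)) /and3P[wpos step_w /allP step0].
split=> // [|b /step0 /orP[/eqP-> /eqP //|/eqP //]].
by case/orP: step_w => /eqP; [left | right].
Qed.

Definition descent t S n : bool :=
  step t (lin S) n (wall t (lin S) n) * sepv t S (wall t (lin S) n) < 0.

Lemma uniq_pos_roots t : uniq (pos_roots t).
Proof. by case: t. Qed.

Lemma alen_gen t S (j : 'I_3) : lin S \in W0mats t ->
  let b := wall t (lin S) j in
  (alen t (acomp S (gen t j)) + absz (sepv t S b))%N =
  (alen t S + absz (sepv t S b + step t (lin S) j b)%R)%N.
Proof.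
move=> SW0 /=; have [wpos _ step0] := step_wall j SW0.
rewrite /alen !(bigD1_seq _ wpos (uniq_pos_roots t)) /= sepv_gen.
rewrite !(big_seq_cond (fun b => b != _)) (eq_bigr (fun b => absz (sepv t S b))); first ring.
by move=> b /andP[bpos bw]; rewrite sepv_gen step0 ?addr0.
Qed.

Lemma alen_gen_lt t S (j : 'I_3) : lin S \in W0mats t ->
  (alen t (acomp S (gen t j)) < alen t S)%N = descent t S j.
Proof.
move=> SW0; have /= := alen_gen j SW0; have [_ step_w _] := step_wall j SW0.
by rewrite /descent; case: step_w => -> E; apply/idP/idP; lia.
Qed.

Lemma alen_gen_le t S (j : 'I_3) : lin S \in W0mats t ->
  (alen t (acomp S (gen t j)) <= (alen t S).+1)%N.
Proof.
move=> SW0; have /= := alen_gen j SW0; have [_ step_w _] := step_wall j SW0.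
by case: step_w => -> E; lia.
Qed.

Lemma alen_id t : alen t aid = 0%N.
Proof. by rewrite /alen big1_seq // => b /andP[_ /sepv_id ->]. Qed.

Lemma alen_word_le_size t u : (alen t (word_aff t u) <= size u)%N.
Proof.
elim/last_ind: u => [|u j IH]; first by rewrite alen_id.
rewrite word_aff_rcons size_rcons.
by apply: leq_trans (alen_gen_le j (word_aff_W0mats t u)) _; rewrite ltnS.
Qed.

Lemma forall_in_foldr (T : eqType) (P : T -> Prop) (s : seq T) :
  foldr (fun x Q => P x /\ Q) True s -> {in s, forall x, P x}.
Proof.
elim: s => [|y s IH] //= [Py /IH Ps] x.
by rewrite inE => /predU1P[-> //|]; apply: Ps.
Qed.

Ltac case_in_seq :=
  apply: forall_in_foldr; cbn [foldr W0mats pos_roots];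
  repeat match goal with |- _ /\ _ => split | |- True => exact I end.

(* Evaluate the closed subterms, leaving linear integer constraints on the translation. *)
Ltac linearize :=
  repeat match goal with
  | |- context [step ?t ?M ?n ?b] =>
      let v := eval vm_compute in (step t M n b) in change (step t M n b) with v
  | |- context [wall ?t ?M ?n] =>
      let v := eval vm_compute in (wall t M n) in change (wall t M n) with v
  | |- context [floor_off ?t ?M ?b] =>
      let v := eval vm_compute in (floor_off t M b) in change (floor_off t M b) with v
  end;
  rewrite /zpair; cbn [fst snd lin tr cartan].

Lemma no_descent_aid t S : lin S \in W0mats t -> (forall j : 'I_3, ~~ descent t S j) -> S = aid.
Proof.
case: S => M l /= MW0 no_desc.
have := no_desc ord0; have := no_desc (Ordinal (isT : (1 < 3)%N)).
have := no_desc (Ordinal (isT : (2 < 3)%N)).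
move: M MW0 l {no_desc}; case: t; case_in_seq; move=> [l1 l2]; rewrite /descent /sepv; linearize.
all: first [move=> *; exfalso; lia | move=> *; congr (Aff _ (_, _)); lia].
Qed.

Lemma short_word_exists t w :
  exists2 u, (size u <= alen t (word_aff t w))%N & word_aff t u = word_aff t w.
Proof.
have [n] := ubnP (alen t (word_aff t w)); elim: n w => // n IH w alen_lt.
have SW0 := word_aff_W0mats t w.
case: (boolP [exists j : 'I_3, descent t (word_aff t w) j]); last first.
  by move=> /existsPn no_desc; exists [::]; rewrite // (no_descent_aid SW0 no_desc).
move=> /existsP[j]; rewrite -alen_gen_lt // -word_aff_rcons => alen_wj.
have [|u size_u word_u] := IH (rcons w j); first exact: leq_trans alen_wj alen_lt.
exists (rcons u j); first by rewrite size_rcons (leq_trans _ alen_wj) // ltnS.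
by rewrite !word_aff_rcons word_u word_aff_rcons -acompA gen_invol acomp_idr.
Qed.

Lemma len_alen t w : len t w = alen t (word_aff t w).
Proof.
rewrite /len; case: ex_minnP => m /asboolP[u [<- act_u]] min_m.
have [v size_v word_v] := short_word_exists t w.
apply/eqP; rewrite eqn_leq; apply/andP; split.
  apply: leq_trans (min_m (size v) _) size_v.
  by apply/asboolP; exists v; split; rewrite // !act_word_aff word_v.
by rewrite -(act_eq_word_aff act_u) alen_word_le_size.
Qed.

Lemma floor_off_inj t : {in W0mats t &, forall M N,
  {in pos_roots t, floor_off t M =1 floor_off t N} -> M = N}.
Proof.
have: all (fun M => all (fun N =>
        ([seq floor_off t M b | b <- pos_roots t] == [seq floor_off t N b | b <- pos_roots t])
          ==> (M == N)) (W0mats t)) (W0mats t).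
  by case: t; vm_compute.
move=> /allP inj M N /inj /allP inj_M /inj_M + /eq_in_map E.
by rewrite E eqxx => /eqP.
Qed.

Lemma floor_off_0N1 t M b : floor_off t M b = 0 \/ floor_off t M b = -1.
Proof. by rewrite /floor_off; case: ifP; [right | left]. Qed.

Lemma absz_offset_min (x k k' : int) :
  (k = -1 <-> 1 <= x) -> k = 0 \/ k = -1 -> k' = 0 \/ k' = -1 ->
  (absz (x + k)%R <= absz (x + k')%R)%N /\ (k != k' -> absz (x + k)%R < absz (x + k')%R)%N.
Proof. by move=> kx k01 k'01; split => [|/eqP]; lia. Qed.

Lemma alen_coset_lt t l M N : M \in W0mats t -> N \in W0mats t -> M != N ->
  {in pos_roots t, forall b, floor_off t M b = -1 <-> 1 <= zpair t l b} ->
  (alen t (Aff M l) < alen t (Aff N l))%N.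
Proof.
move=> MW0 NW0 neqMN M_off.
have [b bpos neq_b] : exists2 b, b \in pos_roots t & floor_off t M b != floor_off t N b.
  apply/hasP; apply: contraNT neqMN => /hasPn E.
  by apply/eqP; apply: floor_off_inj MW0 NW0 _ => b' /E /negPn /eqP.
have termwise b' : b' \in pos_roots t -> _ :=
  fun b'pos => absz_offset_min (M_off b' b'pos) (floor_off_0N1 t M b') (floor_off_0N1 t N b').
rewrite /alen !(bigD1_seq b bpos (uniq_pos_roots t)) -addSn.
apply: leq_add; first exact: (termwise b bpos).2.
rewrite !(big_seq_cond (fun b' => b' != b)); apply: leq_sum => b' /andP[b'pos _].
exact: (termwise b' b'pos).1.
Qed.

(* The core case analysis: S s_i has the length-minimising offsets of [absz_offset_min].
   The hypothesis on s_0 s_i excludes i = 1 in types B2 and G2, where (s_0 s_1)^2 = 1. *)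
Lemma min_coset_floor_off t (i : 'I_3) S :
  (val i = 1 \/ val i = 2)%N -> word_aff t [:: ord0; i; ord0; i] <> aid ->
  lin S \in W0mats t -> has (fun b => sepv t S b == 0) (pos_roots t) ->
  descent t S 0 -> descent t S i -> ~~ descent t S (3 - i) ->
  {in pos_roots t, forall b,
     floor_off t (mmul (lin S) (lin (gen t i))) b = -1 <-> 1 <= zpair t (tr S) b}.
Proof.
case: i => [[|[|[|//]]] ?] /= [] // _ order_ne1; case: t order_ne1 => order_ne1;
  try by case: order_ne1; vm_compute.
all: clear order_ne1; case: S => M l /= MW0; move: M MW0 l; case_in_seq; move=> [l1 l2].
all: rewrite /descent /sepv; cbn [has pos_roots]; linearize.
all: move=> *; case_in_seq; linearize; lia.
Qed.

Lemma word_aff_cat_W0word t w v : W0word v ->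
  word_aff t (w ++ v) = Aff (mmul (lin (word_aff t w)) (lin (word_aff t v))) (tr (word_aff t w)).
Proof.
move=> /(word_aff_W0word t); rewrite word_aff_cat; case: (word_aff t v) => N l /= ->.
exact: acomp_linear.
Qed.

Theorem proposition4p41 (t : rs_type) (w : seq 'I_3) (i : 'I_3) :
  (val i = 1%N \/ val i = 2%N) ->
  (exists b : int * int, exists c : int,
     b \in root_list t /\ in_strip t b c (alcove t w) /\ in_strip t b c (A0 t)) ->
  (forall j : 'I_3, (len t (rcons w j) < len t w)%N <-> (val j = 0%N \/ j = i)) ->
  act t [:: ord0; i; ord0; i] <> id ->
  forall u : seq 'I_3, W0word u ->
    act t (w ++ u) <> act t (rcons w i) ->
    (len t (rcons w i) < len t (w ++ u))%N.
Proof.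
move=> i12 [b [c [broot [strip_w strip_A0]]]] descR order_ne1 u Wu neq_u.
set S := word_aff t w; have SW0 : lin S \in W0mats t := word_aff_W0mats t w.
have descP (j : 'I_3) : descent t S j <-> (val j = 0%N \/ j = i).
  by rewrite -alen_gen_lt // -word_aff_rcons -!len_alen.
have [k k_val] : exists k : 'I_3, val k = (3 - i)%N.
  by exists (inord (3 - i)); rewrite /= inordK //; case: i12 => ->.
have not_desc_k : ~~ descent t S k.
  by apply/negP => /descP[|/(congr1 val)]; rewrite k_val; case: i12 => /= ->.
have Wi : W0word [:: i] by rewrite /W0word /= andbT; case: i12 => ->.
have word_i : word_aff t [:: i] = gen t i := acomp_idr _.
have coset_W0 v : W0word v -> mmul (lin S) (lin (word_aff t v)) \in W0mats t.
  by move=> Wv; have := word_aff_W0mats t (w ++ v); rewrite word_aff_cat_W0word.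
rewrite !len_alen -cats1 !word_aff_cat_W0word //.
apply: alen_coset_lt; rewrite ?coset_W0 //.
  apply/eqP => eq_lin; apply: neq_u.
  by rewrite !act_word_aff -cats1 !word_aff_cat_W0word // eq_lin.
rewrite word_i; apply: min_coset_floor_off => //; last by rewrite -k_val.
- by move=> S_id; apply: order_ne1; rewrite act_word_aff S_id; apply: funext; apply: aff_apply_id.
- exact: strip_sepv0 broot strip_w strip_A0.
- exact: (descP ord0).2 (or_introl erefl).
- exact: (descP i).2 (or_intror erefl).
Qed.
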